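(* Assume Hypothesis C. Let $\hat s\in S$ be a multi-state, $L$ a labeling, and $\pi$ the priority rule keyed to $L$. Then the Evaluator (for $\hat s$, $L$, $\pi$) terminates with $V=V^{\pi}(\hat s)$.
   Context: There are $K$ bandits with pairwise disjoint finite nonempty state sets $N_1,\dots,N_K$; $N=N_1\cup\dots\cup N_K$; $b(j)$ is the $k$ with $j\in N_k$. Bandit $k$ has real transition rates $q(i,j)$ ($i,j\in N_k$) forming $q^k$ and real rewards $r(i)$ forming $r^k$. A multi-state $s$ contains exactly one state $s_k$ of each $N_k$; $S$ is the set of multi-states; $s_{\setminus k}=s\setminus\{s_k\}$. For a map $\delta:S\to\{1,\dots,K\}$ (stationary nonrandomized policy): $Q^{\delta}(s,t)=q(s_{\delta(s)},j)$ if $t=s_{\setminus\delta(s)}\cup\{j\}$ with $j\in N_{\delta(s)}$, else $0$; $R^{\delta}(s)=r(s_{\delta(s)})$; $V^{\delta}=(I-Q^{\delta})^{-1}R^{\delta}$. A matrix is transient if its powers tend to $0$ entrywise. Hypothesis C: each $q^k$ is entrywise nonnegative and transient, and at least one of: (RN) each $q^k$ is substochastic; (RA) $r(i)\le0$ for all $i\in N$; (RS) $r(i)\ge0$ for all $i\in N$. A labeling is an injective $L:N\cup\{0\}\to\{1,\dots,|N|+1\}$ with $L(0)=|N|+1$; the priority rule keyed to $L$ is $\pi(s)=\arg\min_k L(s_k)$. Finalized data: for each bandit $k$, start with the tableau $[(I-q^k),r^k]$ and $M=N_k$, writing the current tableau as $[(I-q),r]$; while $M\ne\emptyset$, let $i\in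 M$ minimize $L(i)$, multiply row $i$ by $1/[1-q(i,i)]$, for each $j\in M\setminus\{i\}$ add $q(j,i)$ (current value) times the updated row $i$ to row $j$, and remove $i$ from $M$. The final tableau $[(I-\tilde q^k),\tilde r^k]$ gives the finalized data $\tilde q(i,j),\tilde r(i)$. Evaluator: For each bandit $p$ define the vector $y^p\in\mathbb R^{N_p}$ by $y^p(j)=1$ if $j=\hat s_p$ and $y^p(j)=0$ otherwise. Set $V=0$. For $n=1,2,\dots,|N|$: let $i$ be the state with $L(i)=n$ and $k=b(i)$; replace $V$ by $V+\tilde r(i)\,y^k(i)\prod_{p\ne k}\big[\sum_{j\in N_p}y^p(j)\big]$; then for each $j\in N_k\setminus\{i\}$ replace $y^k(j)$ by $y^k(j)+y^k(i)\tilde q(i,j)$, and then set $y^k(i)=0$ (no other $y^p$ changes). *)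

From HB Require Import structures.
From mathcomp Require Import all_boot all_order all_algebra.
Set Implicit Arguments. Unset Strict Implicit. Unset Printing Implicit Defensive.
Import Order.TTheory GRing.Theory Num.Theory.
Local Open Scope ring_scope.

Section Bandits.
Variables (R : realFieldType) (I N : finType) (b : N -> I).
(* I : index set of bandits {1..K};  N : all states;  b j : bandit of j;
   N_k = [pred j | b j == k]. *)

Fixpoint rpow (A : pred N) (q : N -> N -> R) (n : nat) (i j : N) : R :=
  match n with
  | 0 => (i == j)%:R
  | n'.+1 => \sum_(l | A l) rpow A q n' i l * q l j
  end.

Definition transient (A : pred N) (q : N -> N -> R) : Prop :=
  forall i j, A i -> A j -> forall eps : R, 0 < eps ->
    exists N0 : nat, forall n : nat, (N0 <= n)%N -> `|rpow A q n i j| < eps.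

Definition hypC (q : N -> N -> R) (r : N -> R) : Prop :=
  (forall i j, b i = b j -> 0 <= q i j) /\
  (forall k, transient [pred j | b j == k] q) /\
  [\/ (forall i, \sum_(j | b j == b i) q i j <= 1)
    , (forall i, r i <= 0)
    | (forall i, 0 <= r i) ].

Definition mstate : finType := {s : {ffun I -> N} | [forall k, b (s k) == k]}.
Definition nS := #|{: mstate}|.
Definition sval_of (x : 'I_nS) : mstate := enum_val x.

(* labeling on N ∪ {0}, with 0 encoded as None *)
Definition labeling (L : option N -> nat) : Prop :=
  injective L /\ (forall x, (1 <= L x <= #|N|.+1)%N) /\ L None = #|N|.+1.

Definition priority_rule (L : option N -> nat) (pi : mstate -> I) : Prop :=
  forall (s : mstate) k, (L (Some (val s (pi s))) <= L (Some (val s k)))%N.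

Definition Qfun (q : N -> N -> R) (delta : mstate -> I) (s t : mstate) : R :=
  let k := delta s in
  if [forall p, (p != k) ==> (val t p == val s p)]
  then q (val s k) (val t k) else 0.

Definition Qmx q delta : 'M[R]_nS :=
  \matrix_(x, y) Qfun q delta (sval_of x) (sval_of y).

Definition Rvec (r : N -> R) (delta : mstate -> I) : 'cV[R]_nS :=
  \col_x r (val (sval_of x) (delta (sval_of x))).

Definition Vdelta q r delta (s : mstate) : R :=
  (invmx (1%:M - Qmx q delta) *m Rvec r delta) (enum_rank s : 'I_nS) 0.

(* tableau [(I - q), r] : A = (I - q) part (rows/cols over N), c = r part *)
Definition qcur (A : N -> N -> R) (i j : N) : R := (i == j)%:R - A i j.

Definition elim_step (M : {set N}) (i : N) (T : (N -> N -> R) * (N -> R)) :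
    (N -> N -> R) * (N -> R) :=
  let (A, c) := T in
  let d := 1 / (1 - qcur A i i) in
  let A1 := fun j l => if j == i then d * A i l else A j l in
  let c1 := fun j => if j == i then d * c i else c j in
  let A2 := fun j l => if (j \in M) && (j != i)
                       then A1 j l + qcur A1 j i * A1 i l else A1 j l in
  let c2 := fun j => if (j \in M) && (j != i)
                     then c1 j + qcur A1 j i * c1 i else c1 j in
  (A2, c2).

(* while M <> set0 (fuel #|N| suffices) *)
Fixpoint elim_loop (L : option N -> nat) (fuel : nat) (M : {set N})
    (T : (N -> N -> R) * (N -> R)) : (N -> N -> R) * (N -> R) :=
  match fuel with
  | 0 => T
  | f.+1 =>
    match [pick i in M | [forall j in M, (L (Some i) <= L (Some j))%N]] with
    | None => T
    | Some i => elim_loop L f (M :\ i) (elim_step M i T)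
    end
  end.

Definition final_tableau L (q : N -> N -> R) (r : N -> R) (k : I) :=
  elim_loop L #|N| [set j | b j == k] (fun i j => (i == j)%:R - q i j, r).

Definition qtil L q r (i j : N) : R := (i == j)%:R - (final_tableau L q r (b i)).1 i j.
Definition rtil L q r (i : N) : R := (final_tableau L q r (b i)).2 i.

(* y : N -> R stores all y^p simultaneously (y^p = y restricted to N_p) *)
Definition eval_step L q r (n : nat) (VY : R * (N -> R)) : R * (N -> R) :=
  let (V, y) := VY in
  match [pick i | L (Some i) == n] with
  | None => VY
  | Some i =>
    let k := b i in
    let V' := V + rtil L q r i * y i *
                  \prod_(p | p != k) (\sum_(j | b j == p) y j) in
    let y1 := fun j => if (b j == k) && (j != i) then y j + y i * qtil L q r i j
                       else y j in
    let y2 := fun j => if j == i then 0 else y1 j in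
    (V', y2)
  end.

Definition evaluator L q r (shat : mstate) : R :=
  (foldl (fun VY n => eval_step L q r n VY)
     (0, fun j => (j == val shat (b j))%:R) (iota 1 #|N|)).1.

End Bandits.

From HB Require Import structures.
From mathcomp Require Import all_boot all_order all_algebra.
From mathcomp Require Import ring zify.
Import Order.TTheory GRing.Theory Num.Theory.
Local Open Scope ring_scope.
Set Implicit Arguments. Unset Strict Implicit. Unset Printing Implicit Defensive.

(* On a block N_k with nonnegative transient q, Gaussian
      elimination in label order never meets a zero pivot (a zero pivot would
      give a nonzero q-invariant vector, impossible since q^n -> 0), and each
      finalized row i is a combination u of initial rows of [(I - q), r]
      supported on labels <= L(i), with unit diagonal and zeros at lower labels.
   2. Finalized equation.  If bandit k is active at s in state i, it stays
      active when it moves to any state of lower label; summing the equations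
      g = rr + Q^pi g at those multi-states with weights u gives
      g(s) = sum_m u(m) rr(m) + sum_(j <> i) qtil(i,j) g(s with s_k := j).
      With rr = 0 this shows, by induction on the label of the active state,
      that I - Q^pi is injective; with rr = r it shows that V^pi satisfies
      the finalized Bellman equation.
   3. Evaluator.  The Evaluator keeps V + sum_s (prod_p y(s_p)) V^pi(s) equal
      to V^pi(shat), with y supported on labels >= n before step n; after the
      last step y = 0.
   The file follows these steps, with the combinatorics of multi-states
   developed between steps 1 and 2. *)

Lemma eventually_all (T : eqType) (P : T -> nat -> Prop) (s : seq T) :
  (forall m, m \in s -> exists N0, forall n, (N0 <= n)%N -> P m n) ->
  exists N0, forall m n, m \in s -> (N0 <= n)%N -> P m n.
Proof.
elim: s => [|x s IH] Hs; first by exists 0%N.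
have [N1 H1] := Hs x (mem_head _ _).
have [N2 H2] : exists N0, forall m n, m \in s -> (N0 <= n)%N -> P m n.
  by apply: IH => m ms; apply: Hs; rewrite in_cons ms orbT.
exists (maxn N1 N2) => m n; rewrite in_cons => /orP [/eqP -> | ms] Hn.
  by apply: H1; apply: leq_trans Hn; apply: leq_maxl.
by apply: H2 => //; apply: leq_trans Hn; apply: leq_maxr.
Qed.

Lemma sum_over_support (R : pzRingType) (N : finType) (P : pred N) (u F : N -> R) :
  (forall m, u m != 0 -> P m) ->
  \sum_(m | P m) u m * F m = \sum_m u m * F m.
Proof.
move=> Hu; rewrite [RHS](bigID P) /= [X in _ + X]big1 ?addr0 // => m /negP Pm.
by case: (eqVneq (u m) 0) => [->|/Hu //]; rewrite mul0r.
Qed.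

Lemma rpow_invariant (R : realFieldType) (N : finType) (P : pred N)
    (q : N -> N -> R) (u : N -> R) :
  (forall l, P l -> u l = \sum_(m | P m) u m * q m l) ->
  forall n l, P l -> u l = \sum_(m | P m) u m * rpow P q n m l.
Proof.
move=> Hu; elim=> [|n IH] l Pl /=.
  rewrite (bigD1 l) //= eqxx mulr1 big1 ?addr0 // => m /andP [_ /negbTE ->].
  by rewrite mulr0.
rewrite (Hu l Pl); under eq_bigr => m _ do rewrite mulr_sumr.
rewrite exchange_big /=; apply: eq_bigr => l' Pl'.
by rewrite (IH l' Pl') mulr_suml; apply: eq_bigr => m _; rewrite mulrA.
Qed.

Section TransientKernel.
Variables (R : realFieldType) (I N : finType) (b : N -> I) (q : N -> N -> R).
Hypothesis q_ge0 : forall i j, b i = b j -> 0 <= q i j.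
Variable k : I.
Hypothesis q_transient : transient [pred j | b j == k] q.

Lemma rpow_subblock (P : pred N) : (forall m, P m -> b m = k) ->
  forall n m l, b l = k ->
  0 <= rpow P q n m l <= rpow [pred j | b j == k] q n m l.
Proof.
move=> Pk; elim=> [|n IH] m l bl /=; first by rewrite lexx ler0n.
have qml l' : b l' = k -> 0 <= q l' l by move=> bl'; apply: q_ge0; rewrite bl bl'.
apply/andP; split.
  apply: sumr_ge0 => l' Pl'; apply: mulr_ge0 (qml _ (Pk _ Pl')).
  by case/andP: (IH m l' (Pk l' Pl')).
rewrite [X in _ <= X](bigID P) /= ler_wpDr //.
  apply: sumr_ge0 => l' /andP [/eqP bl' _]; apply: mulr_ge0 (qml _ bl').
  by case/andP: (IH m l' bl') => H1 H2; apply: le_trans H2.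
rewrite [X in _ <= X](eq_bigl P); last first.
  by move=> l'; apply/andP/idP => [[]//|Pl']; split=> //; rewrite /= Pk.
apply: ler_sum => l' Pl'; apply: ler_wpM2r; first exact: qml (Pk _ Pl').
by case/andP: (IH m l' (Pk l' Pl')).
Qed.

(* Transience: a vector supported on a subset P of N_k and invariant under q
   on P vanishes (u = u q^n on P while q^n tends to 0). *)
Lemma transient_invariant0 (P : pred N) (u : N -> R) :
  (forall m, P m -> b m = k) -> (forall m, u m != 0 -> P m) ->
  (forall l, P l -> u l = \sum_(m | P m) u m * q m l) -> forall l, u l = 0.
Proof.
move=> Pk Psupp Hu l; apply/eqP/negPn/negP => ul0.
have Pl := Psupp _ ul0.
set S := \sum_(m | P m) `|u m|.
have S_ge0 : 0 <= S by apply: sumr_ge0.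
set eps := `|u l| / (1 + S).
have eps_gt0 : 0 < eps by rewrite divr_gt0 ?normr_gt0 // ltr_pwDl.
have [N0 HN0] : exists N0, forall m n, m \in enum N -> (N0 <= n)%N ->
    P m -> `|rpow [pred j | b j == k] q n m l| < eps.
  apply: eventually_all => m _; case Pm: (P m); last by exists 0%N.
  have [N0 HN] := q_transient (introT eqP (Pk m Pm)) (introT eqP (Pk l Pl)) eps_gt0.
  by exists N0 => n Hn _; apply: HN.
have small : `|u l| <= S * eps.
  rewrite (rpow_invariant Hu N0 Pl); apply: le_trans (ler_norm_sum _ _ _) _.
  rewrite /S mulr_suml; apply: ler_sum => m Pm; rewrite normrM ler_wpM2l //.
  have /andP [h1 h2] := rpow_subblock Pk N0 m (Pk l Pl).
  rewrite ger0_norm //; apply: le_trans h2 (le_trans (ler_norm _) _).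
  by apply: ltW; apply: HN0; rewrite ?mem_enum.
have : `|u l| < `|u l|.
  apply: le_lt_trans small _; rewrite /eps mulrA ltr_pdivrMr ?ltr_pwDl //.
  by rewrite mulrC ltr_pM2l ?normr_gt0 // ltrDr ltr01.
by rewrite ltxx.
Qed.

End TransientKernel.

Lemma elim_stepE (R : realFieldType) (N : finType) (M : {set N}) (i : N)
    (A : N -> N -> R) (c : N -> R) :
  (forall j l, (elim_step M i (A, c)).1 j l =
     if j == i then A i l / A i i
     else if j \in M then A j l - A j i * (A i l / A i i) else A j l) /\
  (forall j, (elim_step M i (A, c)).2 j =
     if j == i then c i / A i i
     else if j \in M then c j - A j i * (c i / A i i) else c j).
Proof.
have dE : 1 / (1 - qcur A i i) = (A i i)^-1.
  by rewrite /qcur eqxx opprB addrC subrK div1r.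
split=> [j l|j]; rewrite /elim_step /= dE /qcur mulrC;
  (case: (eqVneq j i) => [->|ji] /=; first by rewrite andbF);
  by rewrite andbT; case: (j \in M) => //; rewrite eqxx sub0r mulNr mulrC.
Qed.

Section Elimination.
Variables (R : realFieldType) (I N : finType) (b : N -> I).
Variables (q : N -> N -> R) (r : N -> R) (L : option N -> nat).
Hypothesis L_inj : injective L.
Hypothesis q_ge0 : forall i j, b i = b j -> 0 <= q i j.
Variable k : I.
Hypothesis q_transient : transient [pred j | b j == k] q.

Local Notation Lb j := (L (Some j)).
Local Notation tableau := ((N -> N -> R) * (N -> R))%type.

Definition row_comb (M : {set N}) (T : tableau) (j : N) (u : N -> R) : Prop :=
  [/\ forall m, u m != 0 ->
        [/\ b m = k, (Lb m <= Lb j)%N & (m == j) || (m \notin M)],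
      forall l, b l = k -> T.1 j l = \sum_(m | b m == k) u m * ((m == l)%:R - q m l),
      T.2 j = \sum_(m | b m == k) u m * r m &
      j \in M -> u j = 1].

Record elim_inv (M : {set N}) (T : tableau) : Prop := ElimInv {
  inv_block : forall j, j \in M -> b j = k;
  inv_comb : forall j, b j = k -> exists u, row_comb M T j u;
  inv_cleared : forall j l, j \in M -> b l = k -> l \notin M -> T.1 j l = 0;
  inv_done : forall j, b j = k -> j \notin M ->
    T.1 j j = 1 /\ forall l, b l = k -> (Lb l < Lb j)%N -> T.1 j l = 0 }.

Lemma comb_IminusQ (u : N -> R) l : b l = k ->
  \sum_(m | b m == k) u m * ((m == l)%:R - q m l) =
  u l - \sum_(m | b m == k) u m * q m l.
Proof.
move=> bl; under eq_bigr => m _ do rewrite mulrBr.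
rewrite sumrB (bigD1 l) ?bl //= eqxx mulr1 big1 ?addr0 // => m /andP [_ /negbTE ->].
by rewrite mulr0.
Qed.

(* No zero pivot: if A i i = 0 the coefficients u of row i would form a
   nonzero q-invariant vector on {i} ∪ (N_k \ M), contradicting transience. *)
Lemma pivot_neq0 M A c i : elim_inv M (A, c) -> i \in M -> A i i != 0.
Proof.
case=> Mk Mcomb Mcleared _ iM; apply/negP => /eqP Aii.
have bi := Mk i iM.
have [u [u_supp /= uA _ ui1]] := Mcomb i bi.
pose P m := (b m == k) && ((m == i) || (m \notin M)).
have Pk m : P m -> b m = k by case/andP=> /eqP.
have Psupp m : u m != 0 -> P m by move=> /u_supp [bm _ H]; rewrite /P bm eqxx.
have u_inv l : P l -> u l = \sum_(m | P m) u m * q m l.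
  move=> /andP [/eqP bl Hl].
  have : A i l = 0 by case/orP: Hl => [/eqP -> // | lM]; apply: Mcleared.
  rewrite uA // comb_IminusQ // => /eqP; rewrite subr_eq0 => /eqP ->.
  rewrite (@sum_over_support _ _ (fun m => b m == k)); last by move=> m /u_supp [-> _ _].
  by rewrite (sum_over_support _ Psupp).
have := transient_invariant0 q_ge0 q_transient Pk Psupp u_inv i.
by rewrite ui1 // => /eqP; rewrite oner_eq0.
Qed.

Section Step.
Variables (M : {set N}) (A : N -> N -> R) (c : N -> R) (i : N).
Hypothesis inv : elim_inv M (A, c).
Hypothesis iM : i \in M.
Hypothesis i_min : forall j, j \in M -> (Lb i <= Lb j)%N.

Local Notation T' := (elim_step M i (A, c)).
Let stepA := (elim_stepE M i A c).1.
Let stepc := (elim_stepE M i A c).2.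
Let A_cleared : forall j l, j \in M -> b l = k -> l \notin M -> A j l = 0 :=
  inv_cleared inv.

Lemma lt_pivot j : j \in M -> j != i -> (Lb i < Lb j)%N.
Proof.
move=> jM ji; rewrite ltn_neqAle i_min // andbT.
by apply: contra ji => /eqP /L_inj [] ->.
Qed.

Lemma notin_setD1 m : m \notin M -> m \notin M :\ i.
Proof. by move=> mM; rewrite in_setD1 (negbTE mM) andbF. Qed.

Lemma step_comb_pivot : exists u, row_comb (M :\ i) T' i u.
Proof.
have [u [u_supp /= uA /= uc _]] := inv_comb inv (inv_block inv iM).
exists (fun m => u m / A i i); split.
- move=> m; rewrite mulf_eq0 negb_or => /andP [/u_supp [bm Lm H] _].
  by split=> //; case/orP: H => [/eqP ->|/notin_setD1 ->]; rewrite ?eqxx ?orbT.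
- move=> l bl; rewrite stepA eqxx uA // mulr_suml.
  by apply: eq_bigr => m _; rewrite mulrAC.
- by rewrite stepc eqxx uc mulr_suml; apply: eq_bigr => m _; rewrite mulrAC.
- by rewrite in_setD1 eqxx.
Qed.

(* A row j of M other than i receives - A j i / A i i times the row of i,
   whose coefficients live on labels below Lb j. *)
Lemma step_comb_active j : j \in M -> j != i -> exists u, row_comb (M :\ i) T' j u.
Proof.
move=> jM ji; have bj := inv_block inv jM.
have [ui [ui_supp /= uiA /= uic _]] := inv_comb inv (inv_block inv iM).
have [uj [uj_supp /= ujA /= ujc uj1]] := inv_comb inv bj.
exists (fun m => uj m - A j i / A i i * ui m); split.
- move=> m H; case: (eqVneq (uj m) 0) => [ujm|/uj_supp [bm Lm Hm]]; last first.
    by split=> //; case/orP: Hm => [->//|/notin_setD1 ->]; rewrite orbT.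
  move: H; rewrite ujm sub0r oppr_eq0 mulf_eq0 negb_or => /andP [_ /ui_supp [bm Lm Hm]].
  split=> //; first by apply: leq_trans Lm (ltnW (lt_pivot jM ji)).
  by case/orP: Hm => [/eqP ->|/notin_setD1 ->]; rewrite ?in_setD1 ?eqxx orbT.
- move=> l bl; rewrite stepA (negbTE ji) jM uiA // ujA //.
  by rewrite mulr_suml mulr_sumr -sumrB; apply: eq_bigr => m _; ring.
- rewrite stepc (negbTE ji) jM uic ujc.
  by rewrite mulr_suml mulr_sumr -sumrB; apply: eq_bigr => m _; ring.
- move=> _; have -> : ui j = 0.
    by apply/eqP/negPn/negP => /ui_supp [_ _]; rewrite (negbTE ji) jM.
  by rewrite uj1 // mulr0 subr0.
Qed.

Lemma step_comb j : b j = k -> exists u, row_comb (M :\ i) T' j u.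
Proof.
move=> bj; case: (eqVneq j i) => [->|ji]; first exact: step_comb_pivot.
case jM: (j \in M); first exact: step_comb_active.
have [u [u_supp /= uA /= uc _]] := inv_comb inv bj.
exists u; split.
- by move=> m /u_supp [bm Lm /orP [->|/notin_setD1 ->]]; rewrite ?orbT.
- by move=> l bl; rewrite stepA (negbTE ji) jM uA.
- by rewrite stepc (negbTE ji) jM uc.
- by rewrite in_setD1 jM andbF.
Qed.

Lemma step_cleared j l : j \in M :\ i -> b l = k -> l \notin M :\ i ->
  T'.1 j l = 0.
Proof.
rewrite !in_setD1 negb_and negbK => /andP [ji jM] bl.
rewrite stepA (negbTE ji) jM => /orP [/eqP -> | lM].
  by rewrite mulfV ?mulr1 ?subrr // (pivot_neq0 inv iM).
by rewrite (A_cleared jM) // (A_cleared iM) // mul0r mulr0 subr0.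
Qed.

(* The new row i has unit diagonal and, like the earlier eliminated rows,
   vanishes at lower labels, which are already eliminated columns. *)
Lemma step_done j : b j = k -> j \notin M :\ i ->
  T'.1 j j = 1 /\ forall l, b l = k -> (Lb l < Lb j)%N -> T'.1 j l = 0.
Proof.
move=> bj; rewrite in_setD1 negb_and negbK => /orP [/eqP -> | jM].
  rewrite stepA eqxx mulfV ?(pivot_neq0 inv iM) //; split=> // l bl Ll.
  have lM : l \notin M by apply/negP => /i_min; rewrite leqNgt Ll.
  by rewrite stepA eqxx (A_cleared iM) // mul0r.
have ji : j != i by apply: contraNneq jM => ->.
have [H1 H2] := inv_done inv bj jM; rewrite /= in H1 H2.
rewrite stepA (negbTE ji) (negbTE jM); split=> // l bl Ll.
by rewrite stepA (negbTE ji) (negbTE jM) H2.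
Qed.

Lemma elim_step_inv : elim_inv (M :\ i) T'.
Proof.
split; [|exact: step_comb|exact: step_cleared|exact: step_done].
by move=> j; rewrite in_setD1 => /andP [_ /(inv_block inv)].
Qed.

End Step.

Lemma elim_loop_inv f : forall M T, elim_inv M T -> (#|M| <= f)%N ->
  elim_inv set0 (elim_loop L f M T).
Proof.
elim: f => [|f IH] M T inv Mf /=.
  by move: Mf; rewrite leqn0 cards_eq0 => /eqP <-.
case: pickP => [i /andP [iM /forall_inP i_min] | no_min].
  case: T inv => A c inv; apply: IH; first exact: elim_step_inv.
  by move: Mf; rewrite (cardsD1 i M) iM.
case: (set_0Vmem M) => [M0|[x xM]]; first by rewrite -M0.
have [j jM j_min] := arg_minnP (fun j => L (Some j)) xM.
have := no_min j; rewrite /= (_ : j \in M) //= => /negbT/negP[].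
by apply/forall_inP => l lM; apply: j_min.
Qed.

Lemma elim_init_inv : elim_inv [set j | b j == k] (fun i j => (i == j)%:R - q i j, r).
Proof.
have unit_comb (F : N -> R) j : b j = k -> \sum_(m | b m == k) (m == j)%:R * F m = F j.
  move=> bj; rewrite (bigD1 j) ?bj //= eqxx mul1r big1 ?addr0 //.
  by move=> m /andP [_ /negbTE ->]; rewrite mul0r.
split.
- by move=> j; rewrite inE => /eqP.
- move=> j bj; exists (fun m => (m == j)%:R); split.
  + by move=> m; case: (eqVneq m j) => [->|] //=; rewrite eqxx.
  + by move=> l bl; rewrite unit_comb.
  + by rewrite unit_comb.
  + by rewrite eqxx.
- by move=> j l _ bl; rewrite inE bl eqxx.
- by move=> j bj; rewrite inE bj eqxx.
Qed.

Lemma final_tableau_inv : elim_inv set0 (final_tableau b L q r k).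
Proof. exact: elim_loop_inv elim_init_inv (max_card _). Qed.

End Elimination.

Section MultiStates.
Variables (R : realFieldType) (I N : finType) (b : N -> I).
Local Notation MS := (mstate b).

Lemma mstate_block (s : MS) p : b (val s p) = p.
Proof. exact/eqP/(forallP (valP s) p). Qed.

Lemma mstate_eq (s t : MS) : (forall p, val s p = val t p) -> s = t.
Proof. by move=> st; apply/val_inj/ffunP. Qed.

Lemma upd_proof (s : MS) j :
  [forall p, b ([ffun p => if p == b j then j else val s p] p) == p].
Proof.
apply/forallP => p; rewrite ffunE.
by case: (eqVneq p (b j)) => [->|_]; rewrite ?eqxx ?mstate_block.
Qed.

Definition upd (s : MS) (j : N) : MS :=
  exist (fun f : {ffun I -> N} => [forall p, b (f p) == p]) _ (upd_proof s j).

Lemma updE s j p : val (upd s j) p = if p == b j then j else val s p.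
Proof. by rewrite /= ffunE. Qed.

Lemma upd_at s j : val (upd s j) (b j) = j.
Proof. by rewrite updE eqxx. Qed.

Lemma upd_upd s j l : b j = b l -> upd (upd s j) l = upd s l.
Proof. by move=> bjl; apply: mstate_eq => p; rewrite !updE bjl; case: eqP. Qed.

Lemma upd_self s p : upd s (val s p) = s.
Proof. by apply: mstate_eq => p'; rewrite updE mstate_block; case: eqP => [->|]. Qed.

Lemma sum_mstate (G : {ffun I -> N} -> R) :
  \sum_(f : {ffun I -> N} | [forall p, b (f p) == p]) G f = \sum_(s : MS) G (val s).
Proof.
rewrite (reindex_omap (val : MS -> {ffun I -> N}) insub); last first.
  by move=> f Pf; rewrite insubT.
apply: eq_bigl => -[f Pf] /=; rewrite Pf /= insubT /=.
by apply/eqP; congr Some; exact: val_inj.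
Qed.

Lemma prod_sum_mstate (z : N -> R) :
  \prod_p \sum_(j | b j == p) z j = \sum_(s : MS) \prod_p z (val s p).
Proof.
under eq_bigr => p _ do rewrite big_mkcond /=.
rewrite bigA_distr_bigA /= -(sum_mstate (fun f => \prod_p z (f p))).
rewrite (bigID (fun f : {ffun I -> N} => [forall p, b (f p) == p])) /=.
rewrite [X in _ + X]big1 ?addr0.
  by apply: eq_bigr => f /forallP Hf; apply: eq_bigr => p _; rewrite Hf.
by move=> f /forallPn [p Hp]; rewrite (bigD1 p) //= (negbTE Hp) mul0r.
Qed.

Lemma sum_Qfun (q : N -> N -> R) (delta : MS -> I) (g : MS -> R) s :
  \sum_t Qfun q delta s t * g t =
  \sum_(j | b j == delta s) q (val s (delta s)) j * g (upd s j).
Proof.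
set k := delta s.
have E j : b j == k -> q (val s k) j * g (upd s j) =
    \sum_t (t == upd s j)%:R * (Qfun q delta s t * g t).
  move=> bj; rewrite (bigD1 (upd s j)) //= eqxx mul1r big1 ?addr0.
    rewrite /Qfun -/k ifT -?(eqP bj) ?upd_at //.
    by apply/forallP => p; apply/implyP => pk; rewrite updE (negbTE pk).
  by move=> t /negbTE ->; rewrite mul0r.
rewrite (eq_bigr _ E) exchange_big /=; apply: eq_bigr => t _; rewrite -mulr_suml.
case C: [forall p, (p != k) ==> (val t p == val s p)]; last first.
  by rewrite /Qfun -/k C !mul0r mulr0.
rewrite (bigD1 (val t k)) ?mstate_block //= big1 ?addr0.
  suff -> : t == upd s (val t k) by rewrite mul1r.
  apply/eqP/mstate_eq => p; rewrite updE mstate_block.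
  case: eqP => [->//|/eqP pk]; apply/eqP.
  by move/forallP: C => /(_ p) /implyP; apply.
move=> j /andP [bj jt]; case: eqP => // tj; exfalso.
by move/negP: jt; apply; rewrite tj -(eqP bj) upd_at.
Qed.

End MultiStates.

Section PriorityRule.
Variables (R : realFieldType) (I N : finType) (b : N -> I).
Variables (q : N -> N -> R) (r : N -> R) (L : option N -> nat).
Variable pi : mstate b -> I.
Hypothesis q_ge0 : forall i j, b i = b j -> 0 <= q i j.
Hypothesis q_transient : forall k, transient [pred j | b j == k] q.
Hypothesis L_inj : injective L.
Hypothesis L_bound : forall x, (L x <= #|N|.+1)%N.
Hypothesis pi_priority : priority_rule L pi.

Local Notation MS := (mstate b).
Local Notation Lb j := (L (Some j)).
Local Notation active s := (val s (pi s)).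
Local Notation Afin i := ((final_tableau b L q r (b i)).1 i).
Local Notation qt := (qtil b L q r).
Local Notation rt := (rtil b L q r).

Lemma finalized_row i : exists u : N -> R,
  [/\ forall m, u m != 0 -> b m = b i /\ (Lb m <= Lb i)%N,
      forall l, b l = b i -> Afin i l = \sum_(m | b m == b i) u m * ((m == l)%:R - q m l),
      rt i = \sum_(m | b m == b i) u m * r m,
      Afin i i = 1 &
      forall l, b l = b i -> (Lb l < Lb i)%N -> Afin i l = 0].
Proof.
have inv := final_tableau_inv r L_inj q_ge0 (@q_transient (b i)).
have [u [u_supp uA uc _]] := inv_comb inv (erefl (b i)).
have [A1 A0] := inv_done inv (erefl (b i)) (negbT (in_set0 i)).
by exists u; split=> // m /u_supp [bm Lm _].
Qed.

Lemma qtil_support i j : b j = b i -> j != i -> qt i j != 0 -> (Lb i < Lb j)%N.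
Proof.
move=> bj ji; have ij : (i == j) = false by rewrite eq_sym (negbTE ji).
rewrite /qtil ij sub0r oppr_eq0.
have [_ [_ _ _ _ A0]] := finalized_row i.
case: (ltngtP (Lb j) (Lb i)) => [lt|//|eq]; first by rewrite A0 // eqxx.
by move/L_inj: eq => [] /eqP; rewrite (negbTE ji).
Qed.

Lemma active_lt (s : MS) p : p != pi s -> (Lb (active s) < Lb (val s p))%N.
Proof.
move=> ps; rewrite ltn_neqAle pi_priority andbT; apply/negP => /eqP /L_inj [] E.
by move: ps; rewrite -(mstate_block s p) -E mstate_block eqxx.
Qed.

Lemma active_eq (s : MS) k :
  (forall p, p != k -> (Lb (val s k) < Lb (val s p))%N) -> pi s = k.
Proof.
move=> Hk; apply/eqP/negPn/negP => pk.
have kp : k != pi s by rewrite eq_sym.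
by have := ltn_trans (Hk _ pk) (active_lt kp); rewrite ltnn.
Qed.

Lemma active_upd_lower (s : MS) m : b m = pi s -> (Lb m <= Lb (active s))%N ->
  pi (upd s m) = pi s.
Proof.
move=> bm Lm; apply: active_eq => p pk; rewrite !updE bm eqxx (negbTE pk).
by apply: leq_trans (active_lt pk); rewrite ltnS.
Qed.

(* Combining the equations at the states
   upd s m (on which bandit pi s stays active) with weights u m produces
   Σ_l Afin i l g(upd s l) on the left, and Afin i i = 1. *)
Lemma finalized_equation (rr : N -> R) (g : MS -> R) :
  (forall s : MS,
     g s = rr (active s) + \sum_(j | b j == pi s) q (active s) j * g (upd s j)) ->
  forall s : MS, exists u : N -> R,
    rt (active s) = \sum_(m | b m == pi s) u m * r m /\
    g s = \sum_(m | b m == pi s) u m * rr m +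
          \sum_(j | (b j == pi s) && (j != active s)) qt (active s) j * g (upd s j).
Proof.
move=> g_eq s; set k := pi s; set i := active s.
have bi : b i = k by rewrite /i mstate_block.
have [u [u_supp uA uc A1 _]] := finalized_row i; rewrite bi in u_supp uc.
have uA' l : b l = k -> Afin i l = \sum_(m | b m == k) u m * ((m == l)%:R - q m l).
  by move=> bl; rewrite uA bi // bl.
exists u; split=> //.
pose f l := g (upd s l).
have f_eq m : b m = k -> (Lb m <= Lb i)%N -> f m = rr m + \sum_(j | b j == k) q m j * f j.
  move=> bm Lm; rewrite /f g_eq active_upd_lower // -/k -bm upd_at.
  by congr (_ + _); apply: eq_bigr => j /eqP bj; rewrite upd_upd // bj.
have comb : \sum_(l | b l == k) Afin i l * f l = \sum_(m | b m == k) u m * rr m.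
  under eq_bigr => l /eqP bl do rewrite uA' // mulr_suml.
  rewrite exchange_big /=; apply: eq_bigr => m /eqP bm.
  case: (eqVneq (u m) 0) => [->|/u_supp [_ Lm]].
    by rewrite mul0r big1 // => l _; rewrite !mul0r.
  under eq_bigr => l _ do rewrite -mulrA.
  rewrite -mulr_sumr; congr (_ * _); under eq_bigr => l _ do rewrite mulrBl.
  rewrite sumrB (bigD1 m) ?bm //= eqxx mul1r big1 ?addr0; first by rewrite f_eq ?addrK.
  by move=> l /andP [_ /negbTE]; rewrite eq_sym => ->; rewrite mul0r.
move: comb; rewrite (bigD1 i) /=; last by rewrite bi.
rewrite A1 mul1r /f upd_self => <-.
rewrite -addrA -[LHS]addr0; congr (_ + _).
rewrite -big_split /= big1 // => j /andP [_ ji].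
have ij : (i == j) = false by rewrite eq_sym (negbTE ji).
by rewrite /qtil ij sub0r mulNr subrr.
Qed.

(* A solution of g = Q^pi g vanishes: by the finalized equation g(s) only
   depends on values of g at multi-states whose active state has a larger
   label, so induction on the (bounded) label of the active state applies. *)
Lemma bellman_kernel0 (g : MS -> R) :
  (forall s : MS, g s = \sum_(j | b j == pi s) q (active s) j * g (upd s j)) ->
  forall s : MS, g s = 0.
Proof.
move=> g_eq.
have g_eq' (s : MS) : g s = (fun _ : N => 0 : R) (active s) +
    \sum_(j | b j == pi s) q (active s) j * g (upd s j).
  by rewrite add0r.
suff g0 n (s : MS) : (#|N|.+2 - Lb (active s) <= n)%N -> g s = 0.
  by move=> s; apply: (g0 #|N|.+2); rewrite leq_subr.
elim: n s => [|n IH] s Hs; first by have := L_bound (Some (active s)); lia.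
have [u [_ ->]] := @finalized_equation (fun _ => 0) g g_eq' s.
rewrite big1 ?add0r => [|m _]; last by rewrite mulr0.
apply: big1 => j /andP [/eqP bj ji].
case: (eqVneq (qt (active s) j) 0) => [->|nz]; first by rewrite mul0r.
have lt := qtil_support (etrans bj (esym (mstate_block s (pi s)))) ji nz.
have lt' : (Lb (active s) < Lb (active (upd s j)))%N.
  by rewrite updE; case: eqP => [_ //|/eqP ne]; apply: active_lt; rewrite -bj.
by rewrite IH ?mulr0 //; have := L_bound (Some (active (upd s j))); lia.
Qed.

Local Notation IminusQ := (1%:M - Qmx q pi).

Lemma sum_ord_mstate (F : 'I_(nS b) -> R) : \sum_y F y = \sum_(t : MS) F (enum_rank t).
Proof.
rewrite (reindex (@enum_rank MS)) //.
by exists enum_val => y _; [exact: enum_rankK | exact: enum_valK].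
Qed.

Lemma IminusQ_row (x : 'cV[R]_(nS b)) (s : MS) :
  (IminusQ *m x) (enum_rank s) 0 =
  x (enum_rank s) 0 - \sum_(j | b j == pi s) q (active s) j * x (enum_rank (upd s j)) 0.
Proof.
rewrite mxE sum_ord_mstate.
under eq_bigr => t _ do rewrite !mxE /sval_of !enum_rankK mulrBl.
rewrite sumrB (bigD1 s) //= eqxx mul1r big1 ?addr0; first by rewrite sum_Qfun.
by move=> t ts; rewrite (inj_eq enum_rank_inj) eq_sym (negbTE ts) mul0r.
Qed.

(* I - Q^pi is invertible: a vector of its (transposed) kernel solves
   g = Q^pi g, hence vanishes. *)
Lemma IminusQ_unit : IminusQ \in unitmx.
Proof.
rewrite unitmxE unitfE -det_tr; apply/negP => /det0P [v v_neq0 vQ].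
pose g (s : MS) := v 0 (enum_rank s).
have g_eq s : g s = \sum_(j | b j == pi s) q (active s) j * g (upd s j).
  have : (IminusQ *m v^T) (enum_rank s) 0 = 0.
    by rewrite -[IminusQ]trmxK -trmx_mul vQ !mxE.
  rewrite IminusQ_row !mxE /g => /eqP; rewrite subr_eq0 => /eqP ->.
  by apply: eq_bigr => j _; rewrite mxE.
have g0 := bellman_kernel0 g_eq.
move/negP: v_neq0; apply; apply/eqP/rowP => y.
by rewrite [RHS]mxE -(enum_valK y); have := g0 (enum_val y); rewrite /g.
Qed.

Local Notation W := (Vdelta q r pi).

Lemma Vdelta_bellman (s : MS) :
  W s = r (active s) + \sum_(j | b j == pi s) q (active s) j * W (upd s j).
Proof.
move/matrixP: (mulKVmx IminusQ_unit (Rvec r pi)) => /(_ (enum_rank s) 0).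
rewrite IminusQ_row [RHS]mxE /sval_of enum_rankK => <-.
by rewrite /Vdelta addrC subrK.
Qed.

Lemma Vdelta_finalized (s : MS) : W s = rt (active s) +
  \sum_(j | (b j == pi s) && (j != active s)) qt (active s) j * W (upd s j).
Proof. by have [u [-> ->]] := finalized_equation Vdelta_bellman s. Qed.

End PriorityRule.

Section EvaluatorInvariant.
Variables (R : realFieldType) (I N : finType) (b : N -> I).
Variables (q : N -> N -> R) (r : N -> R) (L : option N -> nat).
Variable pi : mstate b -> I.
Hypothesis L_labeling : labeling L.
Hypothesis pi_priority : priority_rule L pi.

Local Notation MS := (mstate b).
Local Notation Lb j := (L (Some j)).
Local Notation active s := (val s (pi s)).
Local Notation qt := (qtil b L q r).
Local Notation rt := (rtil b L q r).

Let L_inj : injective L := L_labeling.1.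

Hypothesis qt_support :
  forall i j, b j = b i -> j != i -> qt i j != 0 -> (Lb i < Lb j)%N.

Variable W : MS -> R.
Hypothesis W_finalized : forall s, W s = rt (active s) +
  \sum_(j | (b j == pi s) && (j != active s)) qt (active s) j * W (upd s j).

Local Notation others_mass y k :=
  (\prod_(p | p != k) \sum_(l | b l == p) y l) (only parsing).

Definition coweight (y : N -> R) (k : I) (s : MS) : R := \prod_(p | p != k) y (val s p).
Definition weighted_value (y : N -> R) : R := \sum_(s : MS) (\prod_p y (val s p)) * W s.
Definition slice_value (y : N -> R) (k : I) (j : N) : R :=
  \sum_(s : MS) (val s k == j)%:R * coweight y k s * W s.

Lemma coweight_upd y k s j : b j = k -> coweight y k (upd s j) = coweight y k s.
Proof. by move=> bj; apply: eq_bigr => p pk; rewrite updE bj (negbTE pk). Qed.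

Lemma weighted_value_slices y k :
  weighted_value y = \sum_(j | b j == k) y j * slice_value y k j.
Proof.
under [RHS]eq_bigr => j _ do rewrite mulr_sumr.
rewrite exchange_big /=; apply: eq_bigr => s _.
rewrite (bigD1 k) //= (bigD1 (val s k)) ?mstate_block //= eqxx [X in _ + X]big1 ?addr0.
  by rewrite /coweight mul1r mulrA.
by move=> j /andP [_ /negbTE]; rewrite eq_sym => ->; rewrite !mul0r mulr0.
Qed.

Lemma slice_value_ext y1 y2 k j : (forall l, b l != k -> y1 l = y2 l) ->
  slice_value y1 k j = slice_value y2 k j.
Proof.
move=> y12; apply: eq_bigr => s _; congr (_ * _ * _).
by apply: eq_bigr => p pk; apply: y12; rewrite mstate_block.
Qed.

(* Exchanging the states i and j of bandit k is a bijection on multi-states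
   that preserves the coweight. *)
Lemma slice_value_swap y k i j : b i = k -> b j = k -> i != j ->
  \sum_(s : MS) (val s k == i)%:R * coweight y k s * W (upd s j) = slice_value y k j.
Proof.
move=> bi bj ij.
pose swap (s : MS) := if val s k == i then upd s j
                      else if val s k == j then upd s i else s.
have at_j (s : MS) : val (upd s j) k = j by rewrite -bj upd_at.
have at_i (s : MS) : val (upd s i) k = i by rewrite -bi upd_at.
have ji : (j == i) = false by rewrite eq_sym (negbTE ij).
have upd_back (s : MS) l : val s k = l -> b l = k -> upd s l = s.
  by move=> <- _; rewrite upd_self.
have swapK : involutive swap.
  move=> s; rewrite /swap; case: (eqVneq (val s k) i) => [si|si].
    by rewrite at_j ji eqxx upd_upd ?bi ?bj // upd_back.
  case: (eqVneq (val s k) j) => [sj|sj]; last by rewrite (negbTE si) (negbTE sj).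
  by rewrite at_i eqxx upd_upd ?bi ?bj // upd_back.
rewrite /slice_value (reindex_inj (inv_inj swapK)) /=.
apply: eq_bigr => s _; rewrite /swap.
case: (eqVneq (val s k) i) => [si|si]; first by rewrite at_j ji si (negbTE ij) !mul0r.
case: (eqVneq (val s k) j) => [sj|sj]; last by rewrite (negbTE si) !mul0r.
by rewrite at_i eqxx coweight_upd // upd_upd ?bi ?bj // upd_back.
Qed.

Lemma slice_coweight y k i : b i = k ->
  \sum_(s : MS) (val s k == i)%:R * coweight y k s = others_mass y k.
Proof.
move=> bi; pose z l := if b l == k then (l == i)%:R else y l.
have z_prod : \prod_p (\sum_(l | b l == p) z l) = others_mass y k.
  rewrite (bigD1 k) //= (bigD1 i) ?bi //= /z bi !eqxx big1 ?addr0 ?mul1r.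
    apply: eq_bigr => p pk; apply: eq_bigr => l /eqP bl.
    by rewrite bl (negbTE pk).
  by move=> l /andP [/eqP -> /negbTE ->]; rewrite eqxx.
rewrite -z_prod prod_sum_mstate; apply: eq_bigr => s _.
rewrite (bigD1 k) //= /z mstate_block eqxx; congr (_ * _).
by apply: eq_bigr => p pk; rewrite mstate_block (negbTE pk).
Qed.

(* The slice at the state i of label n, when y lives on labels >= n:
   wherever the slice weight is nonzero, bandit b i is active at state i, so
   the finalized Bellman equation of W splits the slice. *)
Lemma slice_value_finalized y n i : Lb i = n -> (forall l, y l != 0 -> (n <= Lb l)%N) ->
  slice_value y (b i) i = rt i * others_mass y (b i) +
    \sum_(j | (b j == b i) && (j != i)) qt i j * slice_value y (b i) j.
Proof.
move=> Li y_supp; set k := b i.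
have split_W (s : MS) : (val s k == i)%:R * coweight y k s * W s =
    (val s k == i)%:R * coweight y k s *
    (rt i + \sum_(j | (b j == k) && (j != i)) qt i j * W (upd s j)).
  case: (eqVneq (val s k) i) => [si|_]; last by rewrite !mul0r.
  case: (eqVneq (coweight y k s) 0) => [->|y_neq0]; first by rewrite mulr0 !mul0r.
  have pk : pi s = k.
    apply: (active_eq L_inj pi_priority) => p pk; rewrite si.
    move/prodf_neq0: y_neq0 => /(_ p pk) /y_supp; rewrite -Li leq_eqVlt.
    case/orP=> [/eqP/L_inj [] E|//].
    by move: pk; rewrite -(mstate_block s p) -E eqxx.
  by rewrite {1}W_finalized pk si.
rewrite {1}/slice_value (eq_bigr _ (fun s _ => split_W s)).
under eq_bigr => s _ do rewrite mulrDr.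
rewrite big_split /= -(slice_coweight y (erefl k)) mulr_sumr; congr (_ + _).
  by apply: eq_bigr => s _; ring.
under eq_bigr => s _ do rewrite mulr_sumr.
rewrite exchange_big /=; apply: eq_bigr => j /andP [/eqP bj ji].
rewrite -(slice_value_swap y (erefl k) bj) 1?eq_sym // mulr_sumr.
by apply: eq_bigr => s _; ring.
Qed.

Lemma eval_step_label n V y i : Lb i = n ->
  eval_step b L q r n (V, y) =
  (V + rt i * y i * others_mass y (b i),
   fun j => if j == i then 0
            else if (b j == b i) && (j != i) then y j + y i * qt i j else y j).
Proof.
move=> Li; rewrite /eval_step; case: pickP => [i' /eqP Li'|no_i]; last first.
  by have := no_i i; rewrite /= Li eqxx.
by have [->] : Some i' = Some i by apply: L_inj; rewrite Li Li'.
Qed.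

Lemma eval_step_skip n VY : (forall i, Lb i != n) -> eval_step b L q r n VY = VY.
Proof.
move=> no_i; case: VY => V y; rewrite /eval_step; case: pickP => // i /eqP Li.
by have := no_i i; rewrite Li eqxx.
Qed.

Definition eval_inv (w : R) (n : nat) (VY : R * (N -> R)) : Prop :=
  (forall j, VY.2 j != 0 -> (n <= Lb j)%N) /\ VY.1 + weighted_value VY.2 = w.

Section LabelledStep.
Variables (n : nat) (V : R) (y : N -> R) (i : N).
Hypothesis Li : Lb i = n.
Hypothesis y_supp : forall j, y j != 0 -> (n <= Lb j)%N.

(* After the step, y lives on labels > n: the mass of i is moved to
   states of higher label. *)
Lemma eval_step_support j : (eval_step b L q r n (V, y)).2 j != 0 -> (n.+1 <= Lb j)%N.
Proof.
have Lj_neq j' : j' != i -> Lb j' != n.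
  by move=> ji; apply: contra ji; rewrite -Li => /eqP/L_inj [->].
rewrite (eval_step_label V y Li) /=; case: (eqVneq j i) => [->|ji]; first by rewrite eqxx.
rewrite andbT; case bj: (b j == b i) => /=; last first.
  by move=> /y_supp; rewrite ltn_neqAle eq_sym Lj_neq.
case: (eqVneq (y j) 0) => [-> |/y_supp yj _]; last by rewrite ltn_neqAle eq_sym Lj_neq.
rewrite add0r mulf_eq0 negb_or => /andP [_ qt_neq0]; rewrite -Li.
exact: qt_support (eqP bj) ji qt_neq0.
Qed.
(* Moving the mass y i of state i to its finalized successors, and
   crediting rt i times the mass of the slice at i, preserves V + weighted
   value: this is the finalized equation of the slice at i. *)
Lemma eval_step_value : let VY := eval_step b L q r n (V, y) in
  VY.1 + weighted_value VY.2 = V + weighted_value y.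
Proof.
rewrite (eval_step_label V y Li) /= !(weighted_value_slices _ (b i)).
rewrite (bigD1 i) //= [in RHS](bigD1 i) //= eqxx mul0r add0r.
rewrite (slice_value_finalized Li y_supp).
rewrite (eq_bigr (fun j => y j * slice_value y (b i) j +
                           y i * (qt i j * slice_value y (b i) j))).
  by rewrite big_split /= -mulr_sumr; ring.
move=> j /andP [bj ji]; rewrite (negbTE ji) bj /= mulrA -mulrDl; congr (_ * _).
apply: slice_value_ext => l bl; have li : l != i by apply: contraNneq bl => ->.
by rewrite (negbTE li) (negbTE bl).
Qed.

End LabelledStep.

Lemma eval_step_inv w n VY : eval_inv w n VY -> eval_inv w n.+1 (eval_step b L q r n VY).
Proof.
case: VY => V y [y_supp Vy]; rewrite /= in y_supp Vy.
case: (pickP (fun i => Lb i == n)) => [i /eqP Li|no_i]; last first.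
  rewrite eval_step_skip => [|i]; last by rewrite no_i.
  split=> // j /y_supp; rewrite leq_eqVlt => /orP [/eqP E|//].
  by move: (no_i j); rewrite /= -E eqxx.
split=> [j|]; first exact: (eval_step_support (V := V) Li y_supp).
by rewrite (eval_step_value V Li y_supp).
Qed.

Lemma eval_fold_inv w m : forall n VY, eval_inv w n VY ->
  eval_inv w (n + m) (foldl (fun VY n => eval_step b L q r n VY) VY (iota n m)).
Proof.
elim: m => [|m IH] n VY inv /=; first by rewrite addn0.
by rewrite -addSnnS; apply/IH/eval_step_inv.
Qed.

(* Initially y is the indicator of shat, whose weighted value is W shat;
   after the |N| steps y lives on labels > |N|, i.e. nowhere, so V = W shat. *)
Lemma evaluator_value (shat : MS) : evaluator L q r shat = W shat.
Proof.
have [_ [L_range L_none]] := L_labeling.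
pose y0 j : R := (j == val shat (b j))%:R.
have y0_shat (s : MS) : \prod_p y0 (val s p) = (s == shat)%:R.
  case: (eqVneq s shat) => [->|s_shat].
    by apply: big1 => p _; rewrite /y0 mstate_block eqxx.
  have [p /negbTE sp] : exists p, val s p != val shat p.
    apply/existsP; apply: contra_neqT s_shat => /existsPn sp.
    by apply/mstate_eq => p; apply/eqP; move: (sp p); rewrite negbK.
  by rewrite (bigD1 p) //= /y0 mstate_block sp mul0r.
have init : eval_inv (W shat) 1 (0, y0).
  split=> [j _|]; first by case/andP: (L_range (Some j)).
  rewrite /= add0r /weighted_value (bigD1 shat) //= y0_shat eqxx mul1r big1 ?addr0 //.
  by move=> s /negbTE s_shat; rewrite y0_shat s_shat mul0r.
have [y_supp <-] := eval_fold_inv #|N| init.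
set y := (foldl _ _ _).2 in y_supp *.
have y0' j : y j = 0.
  apply/eqP/negPn/negP => /y_supp; rewrite add1n => Lj.
  suff /L_inj : L (Some j) = L None by [].
  by rewrite L_none; apply/eqP; rewrite eqn_leq Lj andbT; case/andP: (L_range (Some j)).
rewrite /weighted_value big1 ?addr0 // => s _.
by rewrite (bigD1 (pi shat)) //= y0' !mul0r.
Qed.
End EvaluatorInvariant.

Unset Implicit Arguments.

Theorem proposition4p2 (R : realFieldType) (I N : finType) (b : N -> I)
  (Nk_nonempty : forall k : I, exists j : N, b j = k)
  (q : N -> N -> R) (r : N -> R)
  (HC : hypC b q r)
  (shat : mstate b) (L : option N -> nat) (HL : labeling L)
  (pi : mstate b -> I) (Hpi : priority_rule L pi) :
  evaluator L q r shat = Vdelta q r pi shat.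
Proof.
have [q_ge0 [q_transient _]] := HC.
have [L_inj [L_range _]] := HL.
have L_bound x : (L x <= #|N|.+1)%N by case/andP: (L_range x).
apply: (evaluator_value HL Hpi) => [i j|s].
- exact: qtil_support.
- exact: Vdelta_finalized.
Qed.
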